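(* Let $p\ge 1$ and let $y_1,y_2\in\mathbb{R}^p$ be two distinct points with $d=\|y_1-y_2\|_2>0$. Let $\lambda>0$, $\delta>0$ and put $\eta=\lambda\delta$. Consider the iterates $(\theta_1^{(t)},\theta_2^{(t)})_{t\ge 0}$ of the MM algorithm described in the context, started at $\theta_1^{(0)}=y_1$, $\theta_2^{(0)}=y_2$. Let $\phi\in(0,1)$. (i) If $\eta>d$ and $$\lambda=\frac{2\phi\,\eta\, d}{(1-\phi)(\eta-d)},$$ then $\|\theta_1^{(1)}-\theta_2^{(0)}\|_2=(1-\phi)\,\|\theta_1^{(0)}-\theta_2^{(0)}\|_2$. (ii) If $\eta\le d$, then $\theta_i^{(t)}=y_i$ for all $t\ge 1$ and $i=1,2$.
   Context: The minimax concave penalty (MCP) with parameters $\lambda>0$, $\delta>0$ is $\rho(t)=\int_0^t(1-\frac{x}{\lambda\delta})_+\,dx$ for $t\ge 0$, so $\rho'(t)=(1-t/(\lambda\delta))_+$. For two observations $y_1,y_2$ one minimizes $\ell(\theta_1,\theta_2)=\|y_1-\theta_1\|_2^2+\|y_2-\theta_2\|_2^2+\lambda\rho(\|\theta_1-\theta_2\|_2)$ by the following blockwise MM (majorization–minimization) iteration, defined as long as the two current centers are distinct. Given $(\theta_1^{(t)},\theta_2^{(t)})$, first set $$w_1^{(t)}=\frac{\bigl(1-\|\theta_1^{(t)}-\theta_2^{(t)}\|_2/(\lambda\delta)\bigr)_+}{2\|\theta_1^{(t)}-\theta_2^{(t)}\|_2},\qquad \theta_1^{(t+1)}=\frac{y_1+\lambda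 w_1^{(t)}\theta_2^{(t)}}{1+\lambda w_1^{(t)}},$$ and then, with $\theta_1$ fixed at its new value, $$w_2^{(t)}=\frac{\bigl(1-\|\theta_2^{(t)}-\theta_1^{(t+1)}\|_2/(\lambda\delta)\bigr)_+}{2\|\theta_2^{(t)}-\theta_1^{(t+1)}\|_2},\qquad \theta_2^{(t+1)}=\frac{y_2+\lambda w_2^{(t)}\theta_1^{(t+1)}}{1+\lambda w_2^{(t)}}.$$ *)

(* R is an abstract real closed field (covers the reals). *)
From HB Require Import structures.
From mathcomp Require Import all_boot all_order all_algebra.
Set Implicit Arguments. Unset Strict Implicit. Unset Printing Implicit Defensive.
Import Order.TTheory GRing.Theory Num.Theory.
Local Open Scope ring_scope.

Definition norm2 {R : rcfType} {p : nat} (v : 'rV[R]_p) : R :=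
  Num.sqrt (\sum_(i < p) (v ord0 i) ^+ 2).

Definition pospart {R : rcfType} (x : R) : R := Num.max x 0.

Definition mm_weight {R : rcfType} (lam delta a : R) : R :=
  pospart (1 - a / (lam * delta)) / (2 * a).

Definition mm_step {R : rcfType} {p : nat} (lam delta : R) (y1 y2 : 'rV[R]_p)
    (th : 'rV[R]_p * 'rV[R]_p) : 'rV[R]_p * 'rV[R]_p :=
  let t1 := th.1 in let t2 := th.2 in
  let w1 := mm_weight lam delta (norm2 (t1 - t2)) in
  let t1' := (1 + lam * w1)^-1 *: (y1 + (lam * w1) *: t2) in
  let w2 := mm_weight lam delta (norm2 (t2 - t1')) in
  let t2' := (1 + lam * w2)^-1 *: (y2 + (lam * w2) *: t1') in
  (t1', t2').

Definition mm_iter {R : rcfType} {p : nat} (lam delta : R) (y1 y2 : 'rV[R]_p)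
    (t : nat) : 'rV[R]_p * 'rV[R]_p :=
  iter t (mm_step lam delta y1 y2) (y1, y2).

From HB Require Import structures.
From mathcomp Require Import all_boot all_order all_algebra.
From mathcomp Require Import ring.
Import Order.TTheory GRing.Theory Num.Theory.
Local Open Scope ring_scope.

(* The update of theta1 is the convex combination (y1 + c theta2) / (1 + c)
   with c = lam w1 >= 0, so theta1' - theta2 = (y1 - theta2) / (1 + c): one
   half-step shrinks the gap to theta2 by the factor 1 / (1 + c).  For
   d < eta the weight is (1 - d/eta) / (2 d), and the prescribed lam makes
   c = phi / (1 - phi), i.e. 1 / (1 + c) = 1 - phi.  For eta <= d the weight
   vanishes, so (y1, y2) is a fixed point of the iteration. *)

Section Norm2.
Variables (R : rcfType) (p : nat).
Implicit Types v : 'rV[R]_p.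

Lemma norm2_ge0 v : 0 <= norm2 v.
Proof. exact: sqrtr_ge0. Qed.

Lemma norm2Z (c : R) v : norm2 (c *: v) = `|c| * norm2 v.
Proof.
rewrite /norm2; under eq_bigr do rewrite mxE exprMn.
by rewrite -mulr_sumr sqrtrM ?sqr_ge0 // sqrtr_sqr.
Qed.

Lemma norm2N v : norm2 (- v) = norm2 v.
Proof. by rewrite -scaleN1r norm2Z normrN normr1 mul1r. Qed.

Lemma norm2B v1 v2 : norm2 (v1 - v2) = norm2 (v2 - v1).
Proof. by rewrite -opprB norm2N. Qed.

End Norm2.

Section MMWeight.
Variables (R : rcfType) (lam delta : R).
Hypotheses (lam_gt0 : 0 < lam) (delta_gt0 : 0 < delta).

Lemma mm_weight_ge0 (a : R) : 0 <= a -> 0 <= mm_weight lam delta a.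
Proof. by move=> a_ge0; rewrite divr_ge0 ?le_max ?lexx ?orbT ?mulr_ge0. Qed.

Lemma mm_weight_eq0 (a : R) : lam * delta <= a -> mm_weight lam delta a = 0.
Proof.
move=> eta_le_a; rewrite /mm_weight /pospart max_r ?mul0r //.
by rewrite subr_le0 ler_pdivlMr ?mulr_gt0 // mul1r.
Qed.

Lemma mm_weight_active (a : R) :
  a <= lam * delta -> mm_weight lam delta a = (1 - a / (lam * delta)) / (2 * a).
Proof.
move=> a_le_eta; rewrite /mm_weight /pospart max_l //.
by rewrite subr_ge0 ler_pdivrMr ?mulr_gt0 // mul1r.
Qed.

End MMWeight.

Lemma scale_convex_subr (R : fieldType) (p : nat) (c : R) (x z : 'rV[R]_p) :
  1 + c != 0 -> (1 + c)^-1 *: (x + c *: z) - z = (1 + c)^-1 *: (x - z).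
Proof.
move=> c1_neq0; apply: (scalerI c1_neq0).
by rewrite scalerBr !scalerA mulfV // !scale1r scalerDl scale1r opprD addrACA subrr addr0.
Qed.

Section MMStep.
Variables (R : rcfType) (p : nat) (lam delta : R) (y1 y2 : 'rV[R]_p).
Hypotheses (lam_gt0 : 0 < lam) (delta_gt0 : 0 < delta).

Lemma mm_step1_subr (th : 'rV[R]_p * 'rV[R]_p) :
  let w := mm_weight lam delta (norm2 (th.1 - th.2)) in
  (mm_step lam delta y1 y2 th).1 - th.2 = (1 + lam * w)^-1 *: (y1 - th.2).
Proof.
move=> w; apply: scale_convex_subr; rewrite lt0r_neq0 // ltr_pwDl //.
by apply: mulr_ge0; [exact: ltW | exact/mm_weight_ge0/norm2_ge0].
Qed.

Lemma mm_step_fixed :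
  lam * delta <= norm2 (y1 - y2) -> mm_step lam delta y1 y2 (y1, y2) = (y1, y2).
Proof.
move=> eta_le_d; rewrite /mm_step /= mm_weight_eq0 // mulr0 addr0 invr1 scale0r.
rewrite addr0 scale1r norm2B mm_weight_eq0 // mulr0 addr0 invr1 scale0r.
by rewrite addr0 scale1r.
Qed.

Lemma mm_iter_fixed (t : nat) :
  lam * delta <= norm2 (y1 - y2) -> mm_iter lam delta y1 y2 t = (y1, y2).
Proof.
move=> eta_le_d; elim: t => [|t IHt] //.
by rewrite /mm_iter iterS -/(mm_iter _ _ _ _ t) IHt mm_step_fixed.
Qed.

End MMStep.

Theorem lemma1 (R : rcfType) (p : nat) (y1 y2 : 'rV[R]_p)
    (lam delta phi : R) :
  (0 < p)%N -> y1 != y2 -> 0 < lam -> 0 < delta -> 0 < phi < 1 ->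
  let d := norm2 (y1 - y2) in
  let eta := lam * delta in
  let th := mm_iter lam delta y1 y2 in
  (d < eta ->
     lam = 2 * phi * eta * d / ((1 - phi) * (eta - d)) ->
     norm2 ((th 1%N).1 - (th 0%N).2) = (1 - phi) * norm2 ((th 0%N).1 - (th 0%N).2))
  /\
  (eta <= d -> forall t : nat, (1 <= t)%N -> (th t).1 = y1 /\ (th t).2 = y2).
Proof.
move=> _ _ lam_gt0 delta_gt0 /andP[phi_gt0 phi_lt1] d eta th.
split=> [d_lt_eta lam_def | eta_le_d t _]; last first.
  by rewrite /th mm_iter_fixed.
have eta_gt0 : 0 < eta by exact: mulr_gt0.
have d_gt0 : 0 < d.
  rewrite lt_neqAle norm2_ge0 andbT; apply/eqP => d0.
  by move: lam_gt0; rewrite lam_def -d0 mulr0 mul0r ltxx.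
have lam_weight : lam * mm_weight lam delta d = phi / (1 - phi).
  rewrite mm_weight_active ?ltW // -/eta {1}lam_def.
  by field; rewrite !lt0r_neq0 // subr_gt0.
have contraction : (1 + phi / (1 - phi))^-1 = 1 - phi.
  by rewrite -[RHS]invrK; congr (_^-1); field; rewrite lt0r_neq0 ?subr_gt0.
have -> : th 1%N = mm_step lam delta y1 y2 (y1, y2) by [].
rewrite [th 0%N]/= mm_step1_subr //= -/d.
by rewrite lam_weight contraction norm2Z ger0_norm // subr_ge0 ltW.
Qed.
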